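(* Let $G$ be a graph with no induced $P_7$, $C_4$, $C_6$ or $C_7$, let $H=(B_1,\dots,B_5)$ be a maximal nice blowup of $C_5$ in $G$, let $i\in\{1,\dots,5\}$, and let $K$ be a connected subgraph of $G[A_2(i)]$. Then $K$ is anticomplete to $A_3(i)$ or to $A_3(i+1)$.
   Context: Indices modulo $5$. A nice blowup of $C_5$ is a tuple $(B_1,\dots,B_5)$ of pairwise disjoint cliques such that every vertex of $B_i$ has a neighbor in $B_{i-1}$ and in $B_{i+1}$, $B_i$ is anticomplete to $B_{i+2}$, and there are no $a\in B_i$, distinct $b,c\in B_{i+1}$, $d\in B_{i+2}$ with $G[\{a,b,c,d\}]\cong P_4$; $V(H)=\bigcup B_j$; maximal means no nice blowup has vertex set strictly containing $V(H)$. For $v\notin V(H)$, $\operatorname{supp}(v)$ is the set of $j$ with $v$ having a neighbor in $B_j$. $A_2(i)$ is the set of $v\notin V(H)$ with $\operatorname{supp}(v)=\{i,i+1\}$; $A_3(i)$ the set with $\operatorname{supp}(v)=\{i-1,i,i+1\}$. *)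

From mathcomp Require Import all_boot all_order.
Set Implicit Arguments. Unset Strict Implicit. Unset Printing Implicit Defensive.

Definition simple_graph (T : finType) (e : rel T) : Prop :=
  symmetric e /\ irreflexive e.

Section Graphs.
Variables (T : finType) (e : rel T).

Definition induced_path_map k (f : 'I_k -> T) : Prop :=
  injective f /\
  forall i j : 'I_k, e (f i) (f j) = ((i.+1 == j :> nat) || (j.+1 == i :> nat)).

Definition induced_cycle_map k (f : 'I_k -> T) : Prop :=
  injective f /\
  forall i j : 'I_k, e (f i) (f j) = ((j == ordS i) || (i == ordS j)).

Definition has_induced_P k : Prop := exists f : 'I_k -> T, induced_path_map f.
Definition has_induced_C k : Prop := exists f : 'I_k -> T, induced_cycle_map f.

Definition induces_P k (S : {set T}) : Prop :=
  exists f : 'I_k -> T, induced_path_map f /\ [set f x | x : 'I_k] = S.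

Definition clique (S : {set T}) : Prop :=
  forall x y, x \in S -> y \in S -> x != y -> e x y.

Definition anticomplete (X Y : {set T}) : Prop :=
  forall x y, x \in X -> y \in Y -> ~~ e x y.

Definition induced_connected (K : {set T}) : Prop :=
  forall x y, x \in K -> y \in K ->
    connect (fun u v => [&& u \in K, v \in K & e u v]) x y.

(* Blowups of C_5: indices are 'I_5, taken modulo 5 via ordS / ord_pred. *)
Definition nice_blowup (B : 'I_5 -> {set T}) : Prop :=
  [/\ (forall i j, i != j -> [disjoint B i & B j]),
      (forall i, clique (B i)),
      (forall i v, v \in B i ->
         (exists2 u, u \in B (ord_pred i) & e v u) /\
         (exists2 u, u \in B (ordS i) & e v u)),
      (forall i, anticomplete (B i) (B (ordS (ordS i)))) &
      (forall i a b c d, a \in B i -> b \in B (ordS i) -> c \in B (ordS i) ->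
         b != c -> d \in B (ordS (ordS i)) -> ~ induces_P 4 [set a; b; c; d])].

Definition blowup_vertices (B : 'I_5 -> {set T}) : {set T} :=
  \bigcup_(j < 5) B j.

Definition maximal_nice_blowup (B : 'I_5 -> {set T}) : Prop :=
  nice_blowup B /\
  ~ exists B' : 'I_5 -> {set T},
      nice_blowup B' /\ blowup_vertices B \proper blowup_vertices B'.

Definition supp (B : 'I_5 -> {set T}) (v : T) : {set 'I_5} :=
  [set j | [exists u in B j, e v u]].

Definition A2 (B : 'I_5 -> {set T}) (i : 'I_5) : {set T} :=
  [set v | (v \notin blowup_vertices B) && (supp B v == [set i; ordS i])].

Definition A3 (B : 'I_5 -> {set T}) (i : 'I_5) : {set T} :=
  [set v | (v \notin blowup_vertices B) &&
           (supp B v == [set ord_pred i; i; ordS i])].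

End Graphs.

From mathcomp Require Import all_boot all_order.
Set Implicit Arguments. Unset Strict Implicit. Unset Printing Implicit Defensive.

(* Two vertices in bags two apart have a common neighbour in the bag
   between them (this is what niceness gives), so an induced path that leaves H
   at one bag and comes back two bags further on closes, through the remaining
   bags, into an induced cycle.  Since G has no induced C4, C6, C7 or P7, every
   hole of G has length 5, and every contradiction in the argument is such a
   cycle of the wrong length or an induced P7.
   A vertex x of A3(j) complete to B_j could be added to B_j, so by maximality x
   has a non-neighbour in B_j.  With such non-neighbours, a case analysis shows
   that A3(i) is anticomplete to A3(i+1).  Finally, if K had neighbours
   x in A3(i) and y in A3(i+1), a shortest x-y path through K, closed up through
   B_(i-1), B_(i-2) and B_(i+2), would be a hole of length at least 6 or would
   contain an induced P7. *)

Section Graph.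
Variables (T : finType) (e : rel T).
Hypotheses (esym : symmetric e) (eirr : irreflexive e).

Lemma adj_neq u v : e u v -> u != v.
Proof. by apply: contraTneq => ->; rewrite eirr. Qed.

Lemma neq_nonadj u v w : e u w -> ~~ e v w -> u != v.
Proof. by move=> uw; apply: contraNneq => <-. Qed.

Lemma has_induced_C_tuple k (s : k.-tuple T) : uniq s ->
  (forall i j : 'I_k, e (tnth s i) (tnth s j) = (j == ordS i) || (i == ordS j)) ->
  has_induced_C e k.
Proof. by move=> /tuple_uniqP s_inj s_adj; exists (tnth s). Qed.

Lemma has_induced_P_tuple k (s : k.-tuple T) : uniq s ->
  (forall i j : 'I_k, e (tnth s i) (tnth s j) = (i.+1 == j :> nat) || (j.+1 == i :> nat)) ->
  has_induced_P e k.
Proof. by move=> /tuple_uniqP s_inj s_adj; exists (tnth s). Qed.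

Ltac pattern_adj := match goal with
  | |- e _ _ = ?r =>
      let r' := eval compute in r in change r with r';
      first [ by rewrite eirr | done | by rewrite esym | exact/negbTE
            | by rewrite esym; exact/negbTE ]
  end.

Ltac pattern_neq :=
  let adj := first [ done | by rewrite esym ] in
  match goal with
  | |- is_true (_ != _) => first [ done | by rewrite eq_sym ]
  | |- is_true (_ != _) => apply: adj_neq; adj
  | |- is_true (_ != _) => rewrite eq_sym; apply: adj_neq; adj
  | H : is_true (e ?w ?z) |- is_true (_ != _) =>
      first [ apply: (neq_nonadj (w := z)); adj
            | rewrite eq_sym; apply: (neq_nonadj (w := z)); adj
            | apply: (neq_nonadj (w := w)); adj
            | rewrite eq_sym; apply: (neq_nonadj (w := w)); adj ]
  end.

Lemma induced_C4 a b c d : a != c -> b != d ->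
  e a b -> e b c -> e c d -> e d a -> ~~ e a c -> ~~ e b d -> has_induced_C e 4.
Proof.
move=> ac bd *; apply: (has_induced_C_tuple (s := [tuple a; b; c; d])).
  by rewrite /= !inE !negb_or ?andbT; do ![apply/andP; split]; pattern_neq.
by move=> [[|[|[|[|//]]]] ?] [[|[|[|[|//]]]] ?]; pattern_adj.
Qed.
Arguments induced_C4 : clear implicits.

Lemma induced_C6 v0 v1 v2 v3 v4 v5 :
  e v0 v1 -> e v1 v2 -> e v2 v3 -> e v3 v4 -> e v4 v5 -> e v5 v0 ->
  ~~ e v0 v2 -> ~~ e v0 v3 -> ~~ e v0 v4 -> ~~ e v1 v3 -> ~~ e v1 v4 ->
  ~~ e v1 v5 -> ~~ e v2 v4 -> ~~ e v2 v5 -> ~~ e v3 v5 ->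
  has_induced_C e 6.
Proof.
move=> *; apply: (has_induced_C_tuple (s := [tuple v0; v1; v2; v3; v4; v5])).
  by rewrite /= !inE !negb_or ?andbT; do ![apply/andP; split]; pattern_neq.
by move=> [[|[|[|[|[|[|//]]]]]] ?] [[|[|[|[|[|[|//]]]]]] ?]; pattern_adj.
Qed.
Arguments induced_C6 : clear implicits.

Lemma induced_C7 v0 v1 v2 v3 v4 v5 v6 :
  e v0 v1 -> e v1 v2 -> e v2 v3 -> e v3 v4 -> e v4 v5 -> e v5 v6 -> e v6 v0 ->
  ~~ e v0 v2 -> ~~ e v0 v3 -> ~~ e v0 v4 -> ~~ e v0 v5 -> ~~ e v1 v3 ->
  ~~ e v1 v4 -> ~~ e v1 v5 -> ~~ e v1 v6 -> ~~ e v2 v4 -> ~~ e v2 v5 ->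
  ~~ e v2 v6 -> ~~ e v3 v5 -> ~~ e v3 v6 -> ~~ e v4 v6 ->
  has_induced_C e 7.
Proof.
move=> *; apply: (has_induced_C_tuple (s := [tuple v0; v1; v2; v3; v4; v5; v6])).
  by rewrite /= !inE !negb_or ?andbT; do ![apply/andP; split]; pattern_neq.
by move=> [[|[|[|[|[|[|[|//]]]]]]] ?] [[|[|[|[|[|[|[|//]]]]]]] ?]; pattern_adj.
Qed.
Arguments induced_C7 : clear implicits.

Lemma induced_P7 v0 v1 v2 v3 v4 v5 v6 :
  e v0 v1 -> e v1 v2 -> e v2 v3 -> e v3 v4 -> e v4 v5 -> e v5 v6 ->
  ~~ e v0 v2 -> ~~ e v0 v3 -> ~~ e v0 v4 -> ~~ e v0 v5 -> ~~ e v0 v6 ->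
  ~~ e v1 v3 -> ~~ e v1 v4 -> ~~ e v1 v5 -> ~~ e v1 v6 -> ~~ e v2 v4 ->
  ~~ e v2 v5 -> ~~ e v2 v6 -> ~~ e v3 v5 -> ~~ e v3 v6 -> ~~ e v4 v6 ->
  has_induced_P e 7.
Proof.
move=> *; apply: (has_induced_P_tuple (s := [tuple v0; v1; v2; v3; v4; v5; v6])).
  by rewrite /= !inE !negb_or ?andbT; do ![apply/andP; split]; pattern_neq.
by move=> [[|[|[|[|[|[|[|//]]]]]]] ?] [[|[|[|[|[|[|[|//]]]]]]] ?]; pattern_adj.
Qed.
Arguments induced_P7 : clear implicits.

Lemma induces_P4 a b c d : e a b -> e b c -> e c d ->
  ~~ e a c -> ~~ e b d -> ~~ e a d -> induces_P e 4 [set a; b; c; d].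
Proof.
move=> *; have s_uniq : uniq [:: a; b; c; d].
  by rewrite /= !inE !negb_or ?andbT; do ![apply/andP; split]; pattern_neq.
exists (tnth [tuple a; b; c; d]); split; first split.
- exact/tuple_uniqP.
- by move=> [[|[|[|[|//]]]] ?] [[|[|[|[|//]]]] ?]; pattern_adj.
apply/setP => z; rewrite !inE; apply/imsetP/idP => [[k _ ->]|].
  by case: k => [[|[|[|[|//]]]] ?]; rewrite (tnth_nth a) /= eqxx ?orbT.
by rewrite -!orbA => /or4P[] /eqP ->;
  [exists ord0 | exists (@Ordinal 4 1 isT) | exists (@Ordinal 4 2 isT) | exists (@Ordinal 4 3 isT)].
Qed.
Arguments induces_P4 : clear implicits.

Lemma induces_P4_shape a b c d : induces_P e 4 [set a; b; c; d] ->
  uniq [:: a; b; c; d] -> e b c -> ~~ e a d ->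
  [&& e a b, ~~ e a c, ~~ e b d & e c d] || [&& e a c, ~~ e a b, ~~ e c d & e b d].
Proof.
move=> [f [[f_inj f_adj] f_im]].
have pre z : z \in [set a; b; c; d] -> exists k, f k = z.
  by rewrite -f_im => /imsetP[k _ ->]; exists k.
have [p <-] : exists k, f k = a by apply: pre; rewrite !inE eqxx.
have [q <-] : exists k, f k = b by apply: pre; rewrite !inE eqxx ?orbT.
have [r <-] : exists k, f k = c by apply: pre; rewrite !inE eqxx ?orbT.
have [s <-] : exists k, f k = d by apply: pre; rewrite !inE eqxx ?orbT.
rewrite /= !inE !(inj_eq f_inj) !f_adj.
by case: p q r s => [[|[|[|[|//]]]] ?] [[|[|[|[|//]]]] ?] [[|[|[|[|//]]]] ?] [[|[|[|[|//]]]] ?].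
Qed.

Fixpoint induced_path x s :=
  if s is y :: s' then
    [&& e x y, all (fun z => (z != x) && ~~ e x z) s' & induced_path y s']
  else true.

Lemma split_last_has (P : pred T) s : has P s ->
  exists s1 z s2, [/\ s = s1 ++ z :: s2, P z & ~~ has P s2].
Proof.
elim: s => //= y s IHs Ps; have [/IHs[s1 [z [s2 [-> Pz nPs2]]]]|nPs] := boolP (has P s).
  by exists (y :: s1), z, s2.
by exists [::], y, s; rewrite (negbTE nPs) orbF in Ps.
Qed.

Lemma induced_subpath x p : path e x p -> x != last x p ->
  exists2 s, {subset s <= p} & last x s = last x p /\ induced_path x s.
Proof.
move=> xp x_last; have [n] := ubnP (size p).
elim: n p x xp x_last => // n IHn p x xp x_last; rewrite ltnS => p_small.
have [|p1 [z [p2 [def_p Pz nPp2]]]] := @split_last_has [pred z | (z == x) || e x z] p.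
  case: p p_small xp x_last => [|y p] _ /=; first by rewrite eqxx.
  by case/andP => ->; rewrite orbT.
have zp2 : path e z p2 by move: xp; rewrite def_p cat_path => /and3P[].
have lt_p2 : size p2 < n.
  by rewrite (leq_trans _ p_small) // def_p size_cat /= addnS ltnS leq_addl.
have sub_p2 : {subset p2 <= p} by move=> w w_p2; rewrite def_p mem_cat inE w_p2 !orbT.
have -> : last x p = last z p2 by rewrite def_p last_cat.
rewrite def_p last_cat in x_last.
case/orP: Pz => [/eqP zx | xz].
  subst z; have [s s_p2 [last_s xs]] := IHn p2 x zp2 x_last lt_p2.
  by exists s => // w /s_p2 /sub_p2.
have z_p : z \in p by rewrite def_p mem_cat inE eqxx orbT.
case: (eqVneq z (last z p2)) => [z_last | z_last].
  exists [:: z]; first by move=> w; rewrite inE => /eqP->.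
  by rewrite /= xz -z_last.
have [s s_p2 [last_s zs]] := IHn p2 z zp2 z_last lt_p2.
exists (z :: s) => [w|]; first by rewrite inE => /predU1P[->|/s_p2/sub_p2].
split=> //=; rewrite xz zs andbT; apply/allP => w /s_p2 w_p2.
by rewrite -negb_or; apply: contra nPp2 => Pw; apply/hasP; exists w.
Qed.

Section Blowup.
Variable B : 'I_5 -> {set T}.
Hypothesis nB : nice_blowup e B.
Hypotheses (noC4 : ~ has_induced_C e 4) (noC6 : ~ has_induced_C e 6).
Hypotheses (noC7 : ~ has_induced_C e 7) (noP7 : ~ has_induced_P e 7).

Definition consecutive (j k : 'I_5) := (k == ordS j) || (j == ordS k).
Definition far (j k : 'I_5) := (k == ordS (ordS j)) || (j == ordS (ordS k)).

Lemma consecutive_succ j : consecutive j (ordS j). Proof. by rewrite /consecutive eqxx. Qed.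
Lemma consecutive_pred j : consecutive (ordS j) j. Proof. by rewrite /consecutive eqxx orbT. Qed.

Lemma bag_adj j u v : u \in B j -> v \in B j -> u != v -> e u v.
Proof. by case: nB => _ clique_B _ _ _; apply: clique_B. Qed.

Lemma bag_nonadj j k u v : u \in B j -> v \in B k -> far j k -> ~~ e u v.
Proof.
case: nB => _ _ _ anti_B _ uj vk /orP[]/eqP kj.
  by rewrite kj in vk; apply: anti_B uj vk.
by rewrite kj in uj; rewrite esym; apply: anti_B vk uj.
Qed.

Lemma bag_neq j k u v : u \in B j -> v \in B k -> j != k -> u != v.
Proof.
case: nB => disj_B _ _ _ _ uj vk jk; apply: contraTneq vk => <-.
by rewrite (disjointFr (disj_B _ _ jk) uj).
Qed.

Lemma bag_nbr j k u : u \in B j -> consecutive j k -> exists2 w, w \in B k & e u w.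
Proof.
case: nB => _ _ nbr_B _ _ /nbr_B[pred_u succ_u] /orP[]/eqP kj; first by rewrite kj.
by rewrite kj ordSK in pred_u.
Qed.

Lemma bag_nested j k m a b c d : a \in B j -> b \in B k -> c \in B k -> d \in B m ->
  k == ordS j -> m == ordS k -> e a b -> e c d -> ~~ e a c -> ~~ e b d -> False.
Proof.
move=> aj bk ck dm /eqP kj /eqP mk ab cd ac bd; subst k m.
have bc : b != c by apply: (neq_nonadj (w := a)); rewrite esym.
case: nB => _ _ _ _ noP4; apply: (noP4 j a b c d) => //.
apply: induces_P4 => //; first exact: bag_adj bk ck bc.
by apply: bag_nonadj aj dm _; rewrite /far eqxx.
Qed.

Lemma bag_common_nbr (j m k : 'I_5) a d : a \in B j -> d \in B k ->
  m == ordS j -> k == ordS m -> exists2 w, w \in B m & e a w && e d w.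
Proof.
move=> aj dk /eqP mj /eqP km; subst m k.
have [w1 w1j aw1] := bag_nbr aj (consecutive_succ j).
have [w2 w2j dw2] := bag_nbr dk (consecutive_pred (ordS j)).
have [dw1|dw1] := boolP (e d w1); first by exists w1; rewrite ?aw1.
have [aw2|aw2] := boolP (e a w2); first by exists w2; rewrite ?aw2.
rewrite esym in dw1; rewrite esym in dw2.
by case: (bag_nested aj w1j w2j dk (eqxx _) (eqxx _) aw1 dw2 aw2 dw1).
Qed.

Lemma supp_nbr v j : j \in supp e B v -> exists2 w, w \in B j & e v w.
Proof. by rewrite inE => /exists_inP. Qed.

Lemma supp_nonadj v j w : w \in B j -> j \notin supp e B v -> ~~ e v w.
Proof. by move=> wj; apply: contra => vw; rewrite inE; apply/exists_inP; exists w. Qed.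

Lemma outside_neq v j w : v \notin blowup_vertices B -> w \in B j -> v != w.
Proof. by move=> vB wj; apply: contraNneq vB => ->; apply/bigcupP; exists j. Qed.

Lemma A3_spec j x : x \in A3 e B j ->
  x \notin blowup_vertices B /\ supp e B x = [set ord_pred j; j; ordS j].
Proof. by rewrite inE => /andP[-> /eqP]. Qed.

Lemma A2_spec j x : x \in A2 e B j ->
  x \notin blowup_vertices B /\ supp e B x = [set j; ordS j].
Proof. by rewrite inE => /andP[-> /eqP]. Qed.

Lemma A3_nonadj j x k w : x \in A3 e B j -> w \in B k ->
  k \notin [set ord_pred j; j; ordS j] -> ~~ e x w.
Proof. by case/A3_spec => _ suppx wk; rewrite -suppx; apply: supp_nonadj. Qed.

Lemma A2_nonadj j x k w : x \in A2 e B j -> w \in B k ->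
  k \notin [set j; ordS j] -> ~~ e x w.
Proof. by case/A2_spec => _ suppx wk; rewrite -suppx; apply: supp_nonadj. Qed.

Lemma A3_neq j x k w : x \in A3 e B j -> w \in B k -> x != w.
Proof. by case/A3_spec => xB _; apply: outside_neq. Qed.

Lemma A2_neq j x k w : x \in A2 e B j -> w \in B k -> x != w.
Proof. by case/A2_spec => xB _; apply: outside_neq. Qed.

Lemma A3_nbr j x k : x \in A3 e B j -> k \in [set ord_pred j; j; ordS j] ->
  exists2 w, w \in B k & e x w.
Proof. by case/A3_spec => _ suppx; rewrite -suppx => /supp_nbr. Qed.

(* [adj] proves the side conditions of the forbidden-subgraph lemmas: edges
   inside a bag, non-edges between bags two apart or between a vertex of A2/A3
   and a bag outside its support, and distinctness; [index_calc] decides the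
   resulting statements about indices by evaluation at each i : 'I_5. *)
Ltac index_calc :=
  match goal with k : 'I_5 |- _ => by case: (k) => [[|[|[|[|[|]]]]] ?]; rewrite ?inE end.

Ltac bag_mem H := lazymatch type of H with
  | context [A3 _ _ _] => fail | context [A2 _ _ _] => fail | _ => idtac end.

Ltac nonadj_mem u v := match goal with
  Hu : context [in_mem u _], Hv : context [in_mem v _] |- _ =>
    lazymatch type of Hu with
    | context [A3 _ _ _] => bag_mem Hv; apply: (A3_nonadj Hu Hv); index_calc
    | context [A2 _ _ _] => bag_mem Hv; apply: (A2_nonadj Hu Hv); index_calc
    | _ => bag_mem Hu; bag_mem Hv; apply: (bag_nonadj Hu Hv); index_calc
    end
  end.

Ltac nonedge := match goal with
  | |- is_true (~~ e ?u ?v) => first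
    [ assumption | rewrite esym; assumption
    | nonadj_mem u v | rewrite esym; nonadj_mem v u ]
  end.

Ltac neq_mem u v := match goal with
  Hu : context [in_mem u _], Hv : context [in_mem v _] |- _ =>
    lazymatch type of Hu with
    | context [A3 _ _ _] => bag_mem Hv; exact: (A3_neq Hu Hv)
    | context [A2 _ _ _] => bag_mem Hv; exact: (A2_neq Hu Hv)
    | _ => bag_mem Hu; bag_mem Hv; apply: (bag_neq Hu Hv); index_calc
    end
  end.

Ltac distinct := match goal with
  | |- is_true (?u != ?v) => first
    [ done | by rewrite eq_sym
    | neq_mem u v | rewrite eq_sym; neq_mem v u
    | match goal with
      | H : is_true (e u ?w) |- _ => apply: (neq_nonadj H); nonedge
      | H : is_true (e ?w u) |- _ => apply: (neq_nonadj (w := w)); [by rewrite esym | nonedge]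
      | H : is_true (e v ?w) |- _ => rewrite eq_sym; apply: (neq_nonadj H); nonedge
      | H : is_true (e ?w v) |- _ =>
          rewrite eq_sym; apply: (neq_nonadj (w := w)); [by rewrite esym | nonedge]
      end ]
  end.

Ltac edge := match goal with
  | |- is_true (e ?u ?v) => first
    [ assumption | rewrite esym; assumption
    | match goal with Hu : context [in_mem u _], Hv : context [in_mem v _] |- _ =>
        bag_mem Hu; bag_mem Hv; apply: (bag_adj Hu Hv); distinct end ]
  end.

Ltac adj := first [ nonedge | edge | distinct ].

(* Adding to B_j a vertex x of A3(j) complete to B_j keeps the blowup nice: an
   induced P4 through x would extend around the pentagon to an induced C6. *)
Section Extension.
Variables (j : 'I_5) (x : T).
Hypotheses (xA3 : x \in A3 e B j) (x_complete : forall w, w \in B j -> e x w).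

Local Notation B' := [eta B with j |-> x |: B j].

Lemma extension_first_noP4 b c d :
  b \in B (ordS j) -> c \in B (ordS j) -> d \in B (ordS (ordS j)) -> b != c ->
  ~ induces_P e 4 [set x; b; c; d].
Proof.
move=> bB cB dB bc P4.
have [a5 a5B xa5] : exists2 w, w \in B (ord_pred j) & e x w by apply: (A3_nbr xA3); index_calc.
have [w wB /andP[dw a5w]] : exists2 w, w \in B (ord_pred (ord_pred j)) & e d w && e a5 w.
  by apply: (bag_common_nbr (m := ord_pred (ord_pred j)) dB a5B); index_calc.
have hole b1 c1 : b1 \in B (ordS j) -> c1 \in B (ordS j) ->
    e x b1 -> ~~ e x c1 -> ~~ e b1 d -> e c1 d -> False.
  move=> b1B c1B *; apply: noC6; apply: (induced_C6 x b1 c1 d w a5); adj.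
have uniq_xbcd : uniq [:: x; b; c; d].
  by rewrite /= !inE !negb_or ?andbT; do ![apply/andP; split]; adj.
have xd : ~~ e x d by adj.
have /orP[] := induces_P4_shape P4 uniq_xbcd (bag_adj bB cB bc) xd => /and4P[*].
  exact: (hole b c).
exact: (hole c b).
Qed.

Lemma extension_last_noP4 a b c :
  a \in B (ord_pred (ord_pred j)) -> b \in B (ord_pred j) -> c \in B (ord_pred j) ->
  b != c -> ~ induces_P e 4 [set a; b; c; x].
Proof.
move=> aB bB cB bc P4.
have [a2 a2B xa2] : exists2 w, w \in B (ordS j) & e x w by apply: (A3_nbr xA3); index_calc.
have [w wB /andP[a2w aw]] : exists2 w, w \in B (ordS (ordS j)) & e a2 w && e a w.
  by apply: (bag_common_nbr (m := ordS (ordS j)) a2B aB); index_calc.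
have hole b1 c1 : b1 \in B (ord_pred j) -> c1 \in B (ord_pred j) ->
    e a b1 -> ~~ e a c1 -> ~~ e b1 x -> e c1 x -> False.
  move=> b1B c1B *; apply: noC6; apply: (induced_C6 a b1 c1 x a2 w); adj.
have uniq_abcx : uniq [:: a; b; c; x].
  by rewrite /= !inE !negb_or ?andbT; do ![apply/andP; split]; adj.
have ax : ~~ e a x by adj.
have /orP[] := induces_P4_shape P4 uniq_abcx (bag_adj bB cB bc) ax => /and4P[*].
  exact: (hole b c).
exact: (hole c b).
Qed.

Lemma extension_second_noP4 a c d :
  a \in B (ord_pred j) -> c \in B j -> d \in B (ordS j) -> ~ induces_P e 4 [set a; x; c; d].
Proof.
move=> aB cB dB P4; have xc := x_complete cB.
have [w1 w1B dw1] : exists2 w, w \in B (ordS (ordS j)) & e d w by apply: bag_nbr dB _; index_calc.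
have [w2 w2B /andP[w1w2 aw2]] : exists2 w, w \in B (ord_pred (ord_pred j)) & e w1 w && e a w.
  by apply: (bag_common_nbr (m := ord_pred (ord_pred j)) w1B aB); index_calc.
have uniq_axcd : uniq [:: a; x; c; d].
  by rewrite /= !inE !negb_or ?andbT; do ![apply/andP; split]; adj.
have ad : ~~ e a d by adj.
have /orP[] := induces_P4_shape P4 uniq_axcd xc ad => /and4P[*].
  by apply: noC6; apply: (induced_C6 a x c d w1 w2); adj.
by apply: noC6; apply: (induced_C6 a c x d w1 w2); adj.
Qed.

Lemma mem_extended (k : 'I_5) v : (v \in B' k) = (k == j) && (v == x) || (v \in B k).
Proof. by rewrite /=; case: eqVneq => [->|]; rewrite ?in_setU1. Qed.

Lemma mem_extended_neq (k : 'I_5) v : k != j -> v \in B' k -> v \in B k.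
Proof. by rewrite mem_extended => /negbTE->. Qed.

Lemma extended_noP4 (k : 'I_5) a b c d :
  a \in B' k -> b \in B' (ordS k) -> c \in B' (ordS k) -> b != c ->
  d \in B' (ordS (ordS k)) -> ~ induces_P e 4 [set a; b; c; d].
Proof.
case: nB => _ _ _ _ noP4 aB bB cB bc dB.
have [kj|k0] := eqVneq k j.
  subst k; have /mem_extended_neq/(_ bB) bB1 : ordS j != j by index_calc.
  have /mem_extended_neq/(_ cB) cB1 : ordS j != j by index_calc.
  have /mem_extended_neq/(_ dB) dB1 : ordS (ordS j) != j by index_calc.
  move: aB; rewrite mem_extended eqxx /= => /predU1P[->|aB].
    exact: extension_first_noP4.
  exact: noP4 aB bB1 cB1 bc dB1.
have {}aB := mem_extended_neq k0 aB.
have [k1|k1] := eqVneq (ordS k) j.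
  have {}dB : d \in B (ordS j).
    by rewrite -k1; apply: mem_extended_neq dB; rewrite -k1; index_calc.
  have {}aB : a \in B (ord_pred j) by rewrite -k1 ordSK.
  rewrite k1 !mem_extended eqxx /= in bB cB.
  case/predU1P: bB => [bx|bB]; case/predU1P: cB => [cx|cB].
  - by rewrite bx cx eqxx in bc.
  - by rewrite bx; apply: extension_second_noP4.
  - have -> : [set a; b; c; d] = [set a; c; b; d].
      by apply/setP => z; rewrite !inE -!orbA (orbCA (z == b)).
    by rewrite cx; apply: extension_second_noP4.
  - by apply: (noP4 (ord_pred j)); rewrite ?ord_predK.
have {}bB := mem_extended_neq k1 bB; have {}cB := mem_extended_neq k1 cB.
have [k2|k2] := eqVneq (ordS (ordS k)) j; last exact: noP4 aB bB cB bc (mem_extended_neq k2 dB).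
rewrite k2 mem_extended eqxx /= in dB; case/predU1P: dB => [->|dB]; last first.
  by apply: (noP4 k); rewrite ?k2.
have kj : k = ord_pred (ord_pred j) by rewrite -k2 !ordSK.
rewrite kj ord_predK in bB cB; rewrite kj in aB.
exact: extension_last_noP4.
Qed.

Lemma extended_nice : nice_blowup e B'.
Proof.
have x_out k : x \in B k = false by apply/negbTE/negP => /(A3_neq xA3); rewrite eqxx.
have lift k u : u \in B k -> u \in B' k by rewrite mem_extended => ->; rewrite orbT.
case: (nB) => disj_B _ nbr_B _ _; split.
- move=> k1 k2 k12; rewrite disjoints_subset; apply/subsetP => v.
  rewrite inE !mem_extended; case/orP => [/andP[/eqP k1j /eqP ->]|v1]; apply/negP.
    case/orP => [/andP[/eqP k2j _]|v2].
    + by move: k12; rewrite k1j k2j eqxx.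
    + by rewrite x_out in v2.
  case/orP => [/andP[_ /eqP vx]|v2].
    + by rewrite vx x_out in v1.
    + by rewrite (disjointFr (disj_B _ _ k12) v1) in v2.
- move=> k u v; rewrite !mem_extended.
  case/orP => [/andP[/eqP -> /eqP ->]|uk]; case/orP => [/andP[/eqP kj /eqP ->]|vk] uv.
  + by rewrite eqxx in uv.
  + exact: x_complete.
  + by rewrite esym; apply: x_complete; rewrite -kj.
  + exact: bag_adj uk vk uv.
- move=> k v; rewrite mem_extended => /orP[/andP[/eqP -> /eqP ->]|/nbr_B[[w wB vw] [w' w'B vw']]].
    have [w wB xw] : exists2 w, w \in B (ord_pred j) & e x w by apply: (A3_nbr xA3); index_calc.
    have [w' w'B xw'] : exists2 w, w \in B (ordS j) & e x w by apply: (A3_nbr xA3); index_calc.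
    by split; [exists w | exists w']; rewrite ?lift.
  by split; [exists w | exists w']; rewrite ?lift.
- move=> k u v; rewrite !mem_extended.
  case/orP => [/andP[/eqP kj /eqP ->]|uk]; case/orP => [/andP[/eqP kj' /eqP ->]|vk].
  + by rewrite eirr.
  + by rewrite kj in vk; adj.
  + by rewrite esym; apply: (A3_nonadj xA3 uk); rewrite -kj'; index_calc.
  + by apply: bag_nonadj uk vk _; rewrite /far eqxx.
- exact: extended_noP4.
Qed.

Lemma extended_proper : blowup_vertices B \proper blowup_vertices B'.
Proof.
apply/properP; split.
  apply/subsetP => v /bigcupP[k _ vk]; apply/bigcupP; exists k => //.
  by rewrite mem_extended vk orbT.
exists x; first by apply/bigcupP; exists j; rewrite // mem_extended !eqxx.
exact: (proj1 (A3_spec xA3)).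
Qed.

End Extension.

Lemma A3_not_complete j x : maximal_nice_blowup e B -> x \in A3 e B j ->
  exists2 w, w \in B j & ~~ e x w.
Proof.
case=> _ B_max xA3; apply/exists_inP; rewrite -negb_forall_in; apply/negP => /forall_inP x_complete.
apply: B_max; exists [eta B with j |-> x |: B j].
by split; [exact: extended_nice | exact: extended_proper].
Qed.

Lemma common_nbr_dec (S : {set T}) u v :
  (exists2 w, w \in S & e u w && e v w) \/ (forall w, w \in S -> e u w -> ~~ e v w).
Proof.
have [/exists_inP|/exists_inPn uv] := boolP [exists w in S, e u w && e v w]; first by left.
by right=> w wS uw; move: (uv w wS); rewrite uw.
Qed.

Section Crossing.
Variables (i : 'I_5) (x y b c : T).
Hypotheses (xA3 : x \in A3 e B i) (yA3 : y \in A3 e B (ordS i)) (xy : e x y).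
Hypotheses (bB : b \in B i) (xb : ~~ e x b) (cB : c \in B (ordS i)) (yc : ~~ e y c).

Lemma crossing_outer_nbrs a4 a2 :
  a4 \in B (ord_pred i) -> e x a4 -> e b a4 ->
  a2 \in B (ordS (ordS i)) -> e y a2 -> e c a2 -> False.
Proof.
move=> a4B xa4 ba4 a2B ya2 ca2.
have yb : ~~ e y b by apply/negP => yb; apply: noC4; apply: (induced_C4 x y b a4); adj.
have xc : ~~ e x c by apply/negP => xc; apply: noC4; apply: (induced_C4 x y a2 c); adj.
have bc : ~~ e b c.
  by apply/negP => bc; apply: noC6; apply: (induced_C6 x y a2 c b a4); adj.
have [b1 b1B bb1] : exists2 w, w \in B (ordS i) & e b w by apply: bag_nbr bB _; index_calc.
have xb1 : ~~ e x b1 by apply/negP => xb1; apply: noC4; apply: (induced_C4 x a4 b b1); adj.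
have a2b1 : e a2 b1.
  by apply/negPn/negP => a2b1; apply: (bag_nested bB b1B cB a2B); by [index_calc | adj].
have yb1 : e y b1.
  by apply/negPn/negP => yb1; apply: noC6; apply: (induced_C6 x y a2 b1 b a4); adj.
have [c0 c0B cc0] : exists2 w, w \in B i & e c w by apply: bag_nbr cB _; index_calc.
have yc0 : ~~ e y c0 by apply/negP => yc0; apply: noC4; apply: (induced_C4 y a2 c c0); adj.
have a4c0 : e a4 c0.
  by apply/negPn/negP => a4c0; apply: (bag_nested a4B bB c0B cB); by [index_calc | adj].
have b1c0 : e b1 c0 by apply/negPn/negP => b1c0; apply: noC4; apply: (induced_C4 b b1 c c0); adj.
have [xc0|xc0] := boolP (e x c0).
  by apply: noC4; apply: (induced_C4 x y b1 c0); adj.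
by apply: noC6; apply: (induced_C6 x y a2 c c0 a4); adj.
Qed.

Lemma crossing_no_outer_nbrs :
  (forall w, w \in B (ord_pred i) -> e x w -> ~~ e b w) ->
  (forall w, w \in B (ordS (ordS i)) -> e y w -> ~~ e c w) -> False.
Proof.
move=> b_miss c_miss.
have [a4 a4B xa4] : exists2 w, w \in B (ord_pred i) & e x w by apply: (A3_nbr xA3); index_calc.
have [a2 a2B ya2] : exists2 w, w \in B (ordS (ordS i)) & e y w by apply: (A3_nbr yA3); index_calc.
have [b4 b4B bb4] : exists2 w, w \in B (ord_pred i) & e b w by apply: bag_nbr bB _; index_calc.
have [c2 c2B cc2] : exists2 w, w \in B (ordS (ordS i)) & e c w by apply: bag_nbr cB _; index_calc.
have ba4 := b_miss _ a4B xa4; have ca2 := c_miss _ a2B ya2.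
have xb4 := contraTN (b_miss _ b4B) bb4; have yc2 := contraTN (c_miss _ c2B) cc2.
have yb : e y b.
  by apply/negPn/negP => yb; apply: noP7; apply: (induced_P7 b b4 a4 x y a2 c2); adj.
have xc : e x c.
  by apply/negPn/negP => xc; apply: noP7; apply: (induced_P7 c c2 a2 y x a4 b4); adj.
have [bc|bc] := boolP (e b c); first by apply: noC4; apply: (induced_C4 x y b c); adj.
by apply: noP7; apply: (induced_P7 b b4 a4 x c c2 a2); adj.
Qed.

Lemma crossing_left_outer_nbr a4 :
  a4 \in B (ord_pred i) -> e x a4 -> e b a4 ->
  (forall w, w \in B (ordS (ordS i)) -> e y w -> ~~ e c w) -> False.
Proof.
move=> a4B xa4 ba4 c_miss.
have yb : ~~ e y b by apply/negP => yb; apply: noC4; apply: (induced_C4 x y b a4); adj.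
have [a2 a2B ya2] : exists2 w, w \in B (ordS (ordS i)) & e y w by apply: (A3_nbr yA3); index_calc.
have [c2 c2B cc2] : exists2 w, w \in B (ordS (ordS i)) & e c w by apply: bag_nbr cB _; index_calc.
have ca2 := c_miss _ a2B ya2; have yc2 := contraTN (c_miss _ c2B) cc2.
have [w1 w1B /andP[bw1 a2w1]] : exists2 w, w \in B (ordS i) & e b w && e a2 w.
  by apply: (bag_common_nbr (m := ordS i) bB a2B); index_calc.
have xw1 : ~~ e x w1 by apply/negP => xw1; apply: noC4; apply: (induced_C4 x a4 b w1); adj.
have yw1 : e y w1.
  by apply/negPn/negP => yw1; apply: noC6; apply: (induced_C6 x y a2 w1 b a4); adj.
have xc : ~~ e x c by apply/negP => xc; apply: noC4; apply: (induced_C4 x y w1 c); adj.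
have [bc|bc] := boolP (e b c).
  by apply: noC7; apply: (induced_C7 x y a2 c2 c b a4); adj.
by apply: noP7; apply: (induced_P7 b a4 x y a2 c2 c); adj.
Qed.

Lemma crossing_right_outer_nbr a2 :
  (forall w, w \in B (ord_pred i) -> e x w -> ~~ e b w) ->
  a2 \in B (ordS (ordS i)) -> e y a2 -> e c a2 -> False.
Proof.
move=> b_miss a2B ya2 ca2.
have xc : ~~ e x c by apply/negP => xc; apply: noC4; apply: (induced_C4 x y a2 c); adj.
have [a4 a4B xa4] : exists2 w, w \in B (ord_pred i) & e x w by apply: (A3_nbr xA3); index_calc.
have [b4 b4B bb4] : exists2 w, w \in B (ord_pred i) & e b w by apply: bag_nbr bB _; index_calc.
have ba4 := b_miss _ a4B xa4; have xb4 := contraTN (b_miss _ b4B) bb4.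
have [w0 w0B /andP[a4w0 cw0]] : exists2 w, w \in B i & e a4 w && e c w.
  by apply: (bag_common_nbr (m := i) a4B cB); index_calc.
have yw0 : ~~ e y w0 by apply/negP => yw0; apply: noC4; apply: (induced_C4 y a2 c w0); adj.
have xw0 : e x w0.
  by apply/negPn/negP => xw0; apply: noC6; apply: (induced_C6 x y a2 c w0 a4); adj.
have yb : ~~ e y b by apply/negP => yb; apply: noC4; apply: (induced_C4 x y b w0); adj.
have [bc|bc] := boolP (e b c).
  by apply: noC7; apply: (induced_C7 x y a2 c b b4 a4); adj.
by apply: noP7; apply: (induced_P7 b b4 a4 x y a2 c); adj.
Qed.

Lemma crossing_impossible : False.
Proof.
case: (common_nbr_dec (B (ord_pred i)) x b) => [[a4 a4B /andP[xa4 ba4]]|b_miss];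
  case: (common_nbr_dec (B (ordS (ordS i))) y c) => [[a2 a2B /andP[ya2 ca2]]|c_miss].
- exact: (crossing_outer_nbrs a4B xa4 ba4 a2B ya2 ca2).
- exact: (crossing_left_outer_nbr a4B xa4 ba4 c_miss).
- exact: (crossing_right_outer_nbr b_miss a2B ya2 ca2).
- exact: (crossing_no_outer_nbrs b_miss c_miss).
Qed.

End Crossing.

Lemma A3_succ_nonadj i x y : maximal_nice_blowup e B ->
  x \in A3 e B i -> y \in A3 e B (ordS i) -> ~~ e x y.
Proof.
move=> maxB xA3 yA3; apply/negP => xy.
have [b bB xb] := A3_not_complete maxB xA3.
have [c cB yc] := A3_not_complete maxB yA3.
exact: (crossing_impossible xA3 yA3 xy bB xb cB yc).
Qed.

Section Component.
Variables (i : 'I_5) (K : {set T}).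
Hypotheses (maxB : maximal_nice_blowup e B) (KA2 : K \subset A2 e B i).
Hypothesis K_conn : induced_connected e K.

(* As x and y are non-adjacent, size s >= 2.  With a5 in B_(i-1), w in B_(i-2)
   and c3 in B_(i+2), the induced path x s (ending at y) closes into a hole of
   length size s + 4; once size s >= 4, w a5 x followed by the first four
   vertices of s is an induced P7. *)
Lemma component_no_link x y s : x \in A3 e B i -> y \in A3 e B (ordS i) ->
  {subset s <= [predU1 y & K]} -> last x s = y -> induced_path x s -> False.
Proof.
move=> xA3 yA3 s_Ky s_y s_ind; have xy := A3_succ_nonadj maxB xA3 yA3.
have [a5 a5B xa5] : exists2 w, w \in B (ord_pred i) & e x w by apply: (A3_nbr xA3); index_calc.
have [c3 c3B yc3] : exists2 w, w \in B (ordS (ordS i)) & e y w by apply: (A3_nbr yA3); index_calc.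
have [w wB /andP[c3w a5w]] : exists2 w, w \in B (ord_pred (ord_pred i)) & e c3 w && e a5 w.
  by apply: (bag_common_nbr (m := ord_pred (ord_pred i)) c3B a5B); index_calc.
have A2_of z : z \in s -> z != y -> z \in A2 e B i.
  by move=> /s_Ky /predU1P[->|/(subsetP KA2)//]; rewrite eqxx.
have away z : z \in s -> ~~ e z a5 && ~~ e z w.
  by move=> /s_Ky /predU1P[->|/(subsetP KA2) zA2]; apply/andP; split; adj.
case: s => [|a [|b [|c [|d s]]]] in s_Ky s_y s_ind A2_of away *.
- move: s_y yc3 => /= <-; apply/negP.
  by apply: (A3_nonadj xA3 c3B); index_calc.
- by move: s_y s_ind => /= ->; rewrite (negbTE xy).
- move: s_y s_ind => /= b_y; subst b; rewrite !andbT => /and3P[xa /andP[_ xy'] ay].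
  have aA2 : a \in A2 e B i by rewrite A2_of ?inE ?eqxx // adj_neq.
  by apply: noC6; apply: (induced_C6 c3 y a x a5 w); adj.
- move: s_y s_ind => /= cy; subst c; rewrite !andbT.
  move=> /and5P[xa /and3P[/andP[_ xb] _ _] ab /andP[ya ay] b_y].
  have aA2 : a \in A2 e B i by rewrite A2_of ?inE ?eqxx // eq_sym.
  have bA2 : b \in A2 e B i by rewrite A2_of ?inE ?eqxx ?orbT // adj_neq.
  by apply: noC7; apply: (induced_C7 c3 y b a x a5 w); adj.
move: s_ind => /= /and3P[xa /and4P[/andP[_ xb] /andP[_ xc] /andP[_ xd] _]].
case/and3P=> ab /and3P[/andP[_ ac] /andP[_ ad] _] /and3P[bc /andP[/andP[_ bd] _] /and3P[cd _ _]].
have /andP[aa5 aw] : ~~ e a a5 && ~~ e a w by apply: away; rewrite !inE eqxx.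
have /andP[ba5 bw] : ~~ e b a5 && ~~ e b w by apply: away; rewrite !inE eqxx ?orbT.
have /andP[ca5 cw] : ~~ e c a5 && ~~ e c w by apply: away; rewrite !inE eqxx ?orbT.
have /andP[da5 dw] : ~~ e d a5 && ~~ e d w by apply: away; rewrite !inE eqxx ?orbT.
by apply: noP7; apply: (induced_P7 w a5 x a b c d); adj.
Qed.

Lemma restricted_path_sub k0 q : path [rel u v | [&& u \in K, v \in K & e u v]] k0 q ->
  {subset q <= K}.
Proof. by elim: q k0 => //= z q IHq u /andP[/and3P[_ zK _] /IHq q_K] v /predU1P[->|/q_K]. Qed.

Lemma A2_component_anticomplete :
  anticomplete e K (A3 e B i) \/ anticomplete e K (A3 e B (ordS i)).
Proof.
have [/exists_inP[k0 k0K /exists_inP[x xA3 k0x]]|no_x] :=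
  boolP [exists k in K, exists x in A3 e B i, e k x]; last first.
  left=> k x kK xA3; apply: contra no_x => kx.
  by apply/exists_inP; exists k => //; apply/exists_inP; exists x.
have [/exists_inP[k1 k1K /exists_inP[y yA3 k1y]]|no_y] :=
  boolP [exists k in K, exists y in A3 e B (ordS i), e k y]; last first.
  right=> k y kK yA3; apply: contra no_y => ky.
  by apply/exists_inP; exists k => //; apply/exists_inP; exists y.
exfalso; have [q q_K q_k1] := connectP (K_conn k0K k1K).
have p_path : path e x (k0 :: rcons q y).
  rewrite /= rcons_path -q_k1 [e x k0]esym k0x k1y andbT.
  by apply: sub_path q_K => u v /and3P[].
have [c3 c3B yc3] : exists2 w, w \in B (ordS (ordS i)) & e y w by apply: (A3_nbr yA3); index_calc.
have xy : x != y by rewrite eq_sym; apply: (neq_nonadj yc3); apply: (A3_nonadj xA3 c3B); index_calc.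
have x_last : x != last x (k0 :: rcons q y) by rewrite /= last_rcons.
have [s s_p [s_y s_ind]] := induced_subpath p_path x_last.
apply: (component_no_link xA3 yA3 _ _ s_ind); last by rewrite s_y /= last_rcons.
move=> z /s_p; rewrite inE mem_rcons !inE => /or3P[/eqP->|->|/(restricted_path_sub q_K) zK].
- by rewrite k0K orbT.
- done.
- by rewrite zK orbT.
Qed.

End Component.
End Blowup.
End Graph.

Theorem lemma7p1 (T : finType) (e : rel T) (B : 'I_5 -> {set T})
    (i : 'I_5) (K : {set T}) :
  simple_graph e ->
  ~ has_induced_P e 7 -> ~ has_induced_C e 4 ->
  ~ has_induced_C e 6 -> ~ has_induced_C e 7 ->
  maximal_nice_blowup e B ->
  K \subset A2 e B i ->
  induced_connected e K ->
  anticomplete e K (A3 e B i) \/ anticomplete e K (A3 e B (ordS i)).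
Proof.
move=> [esym eirr] noP7 noC4 noC6 noC7 maxB.
exact: (A2_component_anticomplete esym eirr (proj1 maxB) noC4 noC6 noC7 noP7 maxB).
Qed.
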